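(* Let $d\ge1$ and $\Box^d\subset\mathbb R^d$ be the $d$-cube. For $1\le i\le d$ let $a_i$ be the facet $\{x\in\Box^d:x_i=1\}$ and $a_{-i}$ the facet $\{x\in\Box^d:x_i=-1\}$. Then the face monoid of $\Box^d$ has a presentation with generators $a_{\pm1},\dots,a_{\pm d}$ and relations $a_i^2=a_i$ for all $i$; $a_ia_j=a_ja_i$ for all $i,j\in\{\pm1,\dots,\pm d\}$; and $a_ia_{-i}=a_ia_{-i}a_j$ for all $i\in\{1,\dots,d\}$ and all $j\in\{\pm1,\dots,\pm d\}$.
   Context: $\Box^d$ is the convex hull of $\{\sum_i\varepsilon_iv_i:\varepsilon_i=\pm1\}$ where $v_1,\dots,v_d$ is the standard basis. The face monoid of a polytope is the set of its faces (including the polytope itself and $\varnothing$) under intersection. *)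

From HB Require Import structures.
From mathcomp Require Import all_boot all_order all_algebra.
From mathcomp Require Import classical_sets reals.
Unset Printing Implicit Defensive.
Import Order.TTheory GRing.Theory Num.Theory.
Local Open Scope ring_scope.
Local Open Scope classical_set_scope.

Definition cube (R : realType) (d : nat) : set ('I_d -> R) :=
  [set x | exists lam : {ffun 'I_d -> bool} -> R,
     (forall e, 0 <= lam e) /\ \sum_(e : {ffun 'I_d -> bool}) lam e = 1 /\
     forall i, x i = \sum_(e : {ffun 'I_d -> bool}) lam e * (if e i then 1 else -1)].

(* Faces of a polytope P: intersections of P with a supporting hyperplane
   {c.x = b} where c.x <= b on P; c = 0, b = 0 gives P, c = 0, b = 1 gives the
   empty face. *)
Definition is_face (R : realType) (d : nat) (P F : set ('I_d -> R)) : Prop :=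
  exists (c : 'I_d -> R) (b : R),
    (forall x, P x -> \sum_i c i * x i <= b) /\
    F = [set x | P x /\ \sum_i c i * x i = b].

(* Generators a_{+-i}: (i, true) is a_{i+1}, (i, false) is a_{-(i+1)}. *)
Definition gen (d : nat) := ('I_d * bool)%type.

Definition facet (R : realType) (d : nat) (g : gen d) : set ('I_d -> R) :=
  [set x | cube R d x /\ x g.1 = (if g.2 then 1 else -1)].

(* The monoid homomorphism from the free monoid (words) to the face monoid
   (faces under intersection, identity the cube itself). *)
Definition word_face (R : realType) (d : nat) (w : seq (gen d)) : set ('I_d -> R) :=
  foldr (fun g F => facet R d g `&` F) (cube R d) w.

Inductive cube_rel (d : nat) : seq (gen d) -> seq (gen d) -> Prop :=
| rel_idem (g : gen d) : cube_rel d [:: g; g] [:: g]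
| rel_comm (g h : gen d) : cube_rel d [:: g; h] [:: h; g]
| rel_opp (i : 'I_d) (h : gen d) :
    cube_rel d [:: (i, true); (i, false)] [:: (i, true); (i, false); h].

Inductive word_cong (T : Type) (rel : seq T -> seq T -> Prop) : seq T -> seq T -> Prop :=
| wc_refl w : word_cong T rel w w
| wc_sym w1 w2 : word_cong T rel w1 w2 -> word_cong T rel w2 w1
| wc_trans w1 w2 w3 : word_cong T rel w1 w2 -> word_cong T rel w2 w3 -> word_cong T rel w1 w3
| wc_step u l r v : rel l r -> word_cong T rel (u ++ l ++ v) (u ++ r ++ v).

From mathcomp Require Import all_boot all_order all_algebra.
From mathcomp Require Import classical_sets reals.
From mathcomp Require Import lra.
Import Order.TTheory GRing.Theory Num.Theory.

(* A word imposes the conditions x_i = +-1 of its letters, so its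
   face only depends on the set of its letters and is empty exactly when the
   word contains a_i and a_{-i} for some i.  Conversely, idempotence and
   commutativity identify words with the same letters, and the third relation
   makes every word containing some a_i a_{-i} equal to a_1 a_{-1}.  A
   nonempty face {x | c.x = max} is cut out by the letters (i, sign c_i) for
   c_i <> 0, and two words without opposite letters are told apart by a
   vertex of the cube. *)

Set Implicit Arguments.
Unset Strict Implicit.
Unset Printing Implicit Defensive.

Local Open Scope ring_scope.
Local Open Scope classical_set_scope.

Arguments wc_refl {T rel w}.
Arguments wc_sym {T rel w1 w2}.
Arguments wc_trans {T rel w1 w2 w3}.
Arguments wc_step {T rel} u {l r} v.
Arguments rel_idem {d}.
Arguments rel_comm {d}.
Arguments rel_opp {d}.

Section WordCongruence.
Variables (T : eqType) (rel : seq T -> seq T -> Prop).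
Notation cong := (word_cong T rel).

Lemma word_cong_ctx u v w1 w2 : cong w1 w2 -> cong (u ++ w1 ++ v) (u ++ w2 ++ v).
Proof.
elim=> [w|a b _ IH|a b c _ IH1 _ IH2|u' l r v' Hlr].
- exact: wc_refl.
- exact: wc_sym.
- exact: wc_trans IH2.
- have := wc_step (u ++ u') (v' ++ v) Hlr.
  by rewrite -!catA.
Qed.

Lemma word_cong_catl u w1 w2 : cong w1 w2 -> cong (u ++ w1) (u ++ w2).
Proof. by move=> H; have := word_cong_ctx u [::] H; rewrite !cats0. Qed.

Lemma word_cong_catr v w1 w2 : cong w1 w2 -> cong (w1 ++ v) (w2 ++ v).
Proof. exact: (word_cong_ctx [::] v). Qed.

Lemma word_cong_head l r w : rel l r -> cong (l ++ w) (r ++ w).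
Proof. exact: (wc_step [::] w). Qed.

Hypothesis idem_rel : forall g, rel [:: g; g] [:: g].
Hypothesis comm_rel : forall g h, rel [:: g; h] [:: h; g].

Lemma word_cong_mem g w : g \in w -> cong (g :: w) w.
Proof.
elim: w => // h w IH; rewrite in_cons => /orP[/eqP->|/IH Hg].
  exact: word_cong_head w (idem_rel h).
apply: wc_trans (word_cong_head w (comm_rel g h)) _.
exact: word_cong_catl [:: h] _ _ Hg.
Qed.

Lemma word_cong_subset u w : {subset u <= w} -> cong (u ++ w) w.
Proof.
elim: u => [|g u IH] sub_uw /=; first exact: wc_refl.
apply: wc_trans (word_cong_mem _) (IH _).
  by rewrite mem_cat sub_uw ?orbT ?mem_head.
by move=> x ux; rewrite sub_uw // in_cons ux orbT.
Qed.

Lemma word_cong_rot g w : cong (g :: w) (w ++ [:: g]).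
Proof.
elim: w => [|h w IH] /=; first exact: wc_refl.
apply: wc_trans (word_cong_head w (comm_rel g h)) _.
exact: word_cong_catl [:: h] _ _ IH.
Qed.

Lemma word_cong_catC u v : cong (u ++ v) (v ++ u).
Proof.
elim: u => [|g u IH] /=; first by rewrite cats0; exact: wc_refl.
apply: wc_trans (word_cong_catl [:: g] IH) _.
by have := word_cong_catr u (word_cong_rot g v); rewrite -catA.
Qed.

Lemma word_cong_eq_mem w1 w2 : w1 =i w2 -> cong w1 w2.
Proof.
move=> E; apply: wc_trans (wc_sym (word_cong_subset (u := w2) _)) _.
  by move=> x; rewrite E.
apply: wc_trans (word_cong_catC _ _) (word_cong_subset _).
by move=> x; rewrite E.
Qed.

End WordCongruence.

Section CubeWords.
Variable d : nat.
Notation cong := (word_cong (gen d) (cube_rel d)).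

Definition contradictory (w : seq (gen d)) :=
  [exists i : 'I_d, ((i, true) \in w) && ((i, false) \in w)].

Definition zero_word (i : 'I_d) : seq (gen d) := [:: (i, true); (i, false)].

Lemma zero_word_contradictory i : contradictory (zero_word i).
Proof. by apply/existsP; exists i; rewrite !inE !eqxx orbT. Qed.

Lemma cube_cong_eq_mem w1 w2 : w1 =i w2 -> cong w1 w2.
Proof. exact/word_cong_eq_mem/rel_comm/rel_idem. Qed.

Lemma zero_word_absorb i w : cong (zero_word i ++ w) (zero_word i).
Proof.
elim: w => [|h w IH]; first by rewrite cats0; exact: wc_refl.
exact: wc_trans (wc_sym (word_cong_head w (rel_opp i h))) IH.
Qed.

Lemma cong_zero_word w i :
  (i, true) \in w -> (i, false) \in w -> cong w (zero_word i).
Proof.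
move=> wt wf; apply: wc_trans (zero_word_absorb i w).
apply: cube_cong_eq_mem => x; rewrite mem_cat !inE.
by case: eqP => [->|_]; rewrite ?wt //; case: eqP => [->|_]; rewrite ?wf.
Qed.

Lemma cong_contradictory w1 w2 :
  contradictory w1 -> contradictory w2 -> cong w1 w2.
Proof.
case/existsP=> i /andP[w1t w1f] /existsP[j /andP[w2t w2f]].
apply: wc_trans (cong_zero_word w1t w1f) _.
apply: wc_trans _ (wc_sym (cong_zero_word w2t w2f)).
apply: wc_trans (wc_sym (zero_word_absorb i (zero_word j))) _.
exact: wc_trans (word_cong_catC rel_comm _ _) (zero_word_absorb j _).
Qed.

End CubeWords.

Section DotOnBox.
Variables (R : realDomainType) (n : nat).

Definition bsign (b : bool) : R := if b then 1 else -1.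

Lemma mul_le_normr (c y : R) : `|y| <= 1 -> c * y <= `|c|.
Proof.
move=> y_le1; apply: le_trans (ler_norm _) _; rewrite normrM.
by have := normr_ge0 c; have := normr_ge0 y; nra.
Qed.

Lemma mul_eq_normrP (c y : R) :
  `|y| <= 1 -> c * y = `|c| <-> (c != 0 -> y = bsign (0 < c)).
Proof.
rewrite ler_norml /bsign => /andP[y_ge y_le].
case: (ltrgtP c 0) => [c_lt0|c_gt0|->]; rewrite ?normr0 ?mul0r ?eqxx //.
- by rewrite ltr0_norm //; split=> [cy _|/(_ isT) ->]; [nra | rewrite ?mulr1 ?mulrN1].
- by rewrite gtr0_norm //; split=> [cy _|/(_ isT) ->]; [nra | rewrite ?mulr1 ?mulrN1].
Qed.

Lemma dot_le_norm1 (c x : 'I_n -> R) :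
  (forall i, `|x i| <= 1) -> \sum_i c i * x i <= \sum_i `|c i|.
Proof. by move=> x_le1; apply: ler_sum => i _; exact: mul_le_normr. Qed.

Lemma dot_eq_norm1P (c x : 'I_n -> R) : (forall i, `|x i| <= 1) ->
  \sum_i c i * x i = \sum_i `|c i| <-> forall i, c i != 0 -> x i = bsign (0 < c i).
Proof.
move=> x_le1; split=> [E i|E]; last first.
  by apply: eq_bigr => i _; apply/(mul_eq_normrP _ (x_le1 i))/E.
apply/(mul_eq_normrP _ (x_le1 i)); apply/eqP; rewrite eq_sym -subr_eq0; apply/eqP.
have gap_ge0 j : xpredT j -> 0 <= `|c j| - c j * x j.
  by move=> _; rewrite subr_ge0 mul_le_normr.
apply: (psumr_eq0P gap_ge0) => //.
by rewrite sumrB E subrr.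
Qed.

End DotOnBox.
Arguments bsign {R}.

Section CubeFaces.
Variables (R : realType) (d : nat).
Notation cong := (word_cong (gen d) (cube_rel d)).
Notation cube := (cube R d).
Notation word_face := (word_face R d).

Definition on_facets (w : seq (gen d)) (x : 'I_d -> R) : Prop :=
  forall g, g \in w -> x g.1 = bsign g.2.

Lemma word_faceE w : word_face w = [set x | cube x /\ on_facets w x].
Proof.
elim: w => [|g w IH] /=; apply/seteqP; split=> x /=.
- by move=> cx; split=> // g; rewrite in_nil.
- by case.
- rewrite IH => -[[_ xg] [cx xw]]; split=> // h.
  by rewrite in_cons => /orP[/eqP->|/xw].
- move=> [cx xw]; rewrite IH; split; first by split; rewrite ?xw ?mem_head.
  by split=> // h hw; rewrite xw // in_cons hw orbT.
Qed.

Lemma on_facets_cat u v x : on_facets (u ++ v) x <-> on_facets u x /\ on_facets v x.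
Proof.
split=> [uv|[xu xv] g]; last by rewrite mem_cat => /orP[/xu|/xv].
by split=> g gw; apply: uv; rewrite mem_cat gw ?orbT.
Qed.

Lemma on_facets_eq_mem u v x : u =i v -> on_facets u x <-> on_facets v x.
Proof. by move=> E; split=> xw g gw; apply: xw; rewrite ?E // -E. Qed.

Lemma not_on_facets_contradictory w x : contradictory w -> ~ on_facets w x.
Proof.
by case/existsP=> i /andP[wt wf] xw; move: (xw _ wt) (xw _ wf) => /= ->; lra.
Qed.

Lemma on_facets_rel l r x : cube_rel d l r -> on_facets l x <-> on_facets r x.
Proof.
case=> [g|g h|i h].
- by apply: on_facets_eq_mem => z; rewrite !inE orbb.
- by apply: on_facets_eq_mem => z; rewrite !inE orbC.
- have contra w : (i, true) \in w -> (i, false) \in w -> ~ on_facets w x.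
    by move=> wt wf; apply: not_on_facets_contradictory; apply/existsP; exists i; rewrite wt.
  by split=> /contra; rewrite !inE !eqxx ?orbT => /(_ isT isT).
Qed.

Lemma on_facets_cong w1 w2 x : cong w1 w2 -> on_facets w1 x <-> on_facets w2 x.
Proof.
elim=> {w1 w2} [w|u v _ IH|u v w _ IH1 _ IH2|u l r v Hlr] //.
- by rewrite IH.
- by rewrite IH1.
- by rewrite !on_facets_cat (on_facets_rel x Hlr).
Qed.

Lemma word_face_cong w1 w2 : cong w1 w2 -> word_face w1 = word_face w2.
Proof.
move=> E; rewrite !word_faceE; apply/seteqP.
by split=> x /= [cx xw]; split; rewrite // ?(on_facets_cong x E) // -(on_facets_cong x E).
Qed.

Lemma word_face_contradictory w : contradictory w -> word_face w = set0.
Proof.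
move=> cw; rewrite word_faceE; apply/seteqP; split=> x // [_].
exact: not_on_facets_contradictory.
Qed.

Definition vertex (e : {ffun 'I_d -> bool}) : 'I_d -> R := fun i => bsign (e i).

Lemma vertex_cube e : cube (vertex e).
Proof.
exists (fun e' => (e' == e)%:R); split=> [e'|]; first by rewrite ler0n.
split=> [|i]; rewrite (bigD1 e) //= big1 ?addr0 ?eqxx ?mul1r // => e' /negbTE->.
all: by rewrite ?mul0r.
Qed.

Lemma cube_norm_le1 x : cube x -> forall i, `|x i| <= 1.
Proof.
case=> lam [lam_ge0 [lam_sum1 x_eq]] i; rewrite ler_norml.
suff : \sum_e - lam e <= x i <= \sum_e lam e by rewrite sumrN lam_sum1.
have bound_term e : - lam e <= lam e * bsign (e i) <= lam e.
  by have := lam_ge0 e; rewrite /bsign; case: (e i); rewrite ?mulr1 ?mulrN1; lra.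
by rewrite x_eq; apply/andP; split; apply: ler_sum => e _; case/andP: (bound_term e).
Qed.

Lemma vertex_word_face w (e : {ffun 'I_d -> bool}) :
  (forall g, g \in w -> e g.1 = g.2) -> word_face w (vertex e).
Proof.
move=> ew; rewrite word_faceE; split=> [|g /ew]; first exact: vertex_cube.
by rewrite /vertex => ->.
Qed.

Definition word_signs (w : seq (gen d)) : {ffun 'I_d -> bool} :=
  [ffun i => (i, true) \in w].

Lemma word_signsP w g :
  ~~ contradictory w -> g \in w -> word_signs w g.1 = g.2.
Proof.
case: g => i [] /existsPn/(_ i) nc gw; rewrite ffunE //=.
by apply: contraNF nc => wt; rewrite wt.
Qed.

Lemma word_face_nonempty w : ~~ contradictory w -> word_face w !=set0.
Proof.
by move=> nc; exists (vertex (word_signs w)); apply: vertex_word_face => g; apply: word_signsP.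
Qed.

Lemma word_face_avoid w g : ~~ contradictory w -> g \notin w ->
  exists2 x, word_face w x & x g.1 = bsign (~~ g.2).
Proof.
case: g => i b nc gw.
exists (vertex [ffun j => if j == i then ~~ b else word_signs w j]);
  last by rewrite /vertex ffunE eqxx.
apply: vertex_word_face => -[j c] jw; rewrite ffunE /=.
case: eqP => [ji|_]; last exact: (word_signsP nc jw).
by subst j; case: b c gw jw => -[] // /negbTE->.
Qed.

Definition support_word (c : 'I_d -> R) : seq (gen d) :=
  [seq (i, 0 < c i) | i <- enum 'I_d & c i != 0].

Lemma mem_support_word c g :
  (g \in support_word c) = (c g.1 != 0) && (g.2 == (0 < c g.1)).
Proof.
case: g => i b /=; apply/mapP/andP => [[j] | [ci_neq0 /eqP->]].
  by rewrite mem_filter => /andP[cj_neq0 _] [-> ->].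
by exists i; rewrite // mem_filter ci_neq0 mem_enum.
Qed.

Lemma word_face_support c :
  word_face (support_word c) = [set x | cube x /\ \sum_i c i * x i = \sum_i `|c i|].
Proof.
rewrite word_faceE; apply/seteqP; split=> x /= [cx xE]; split=> //.
  apply/(dot_eq_norm1P c (cube_norm_le1 cx)) => i ci_neq0.
  by apply: (xE (i, 0 < c i)); rewrite mem_support_word ci_neq0 eqxx.
move=> [i b]; rewrite mem_support_word => /andP[ci_neq0 /eqP-> /=].
exact: (dot_eq_norm1P c (cube_norm_le1 cx)).1 xE i ci_neq0.
Qed.

Lemma dot_vertex_sign c :
  \sum_i c i * vertex [ffun i => 0 <= c i] i = \sum_i `|c i|.
Proof.
apply: eq_bigr => i _; rewrite /vertex /bsign ffunE.
by case: lerP => c_sgn; rewrite ?mulr1 ?mulrN1 ?(ger0_norm c_sgn) ?(ltr0_norm c_sgn).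
Qed.

Lemma is_face_set0 : is_face R d cube set0.
Proof.
exists (fun _ => 0), 1; split=> [x _|].
  by rewrite big1 ?ler01 // => i _; rewrite mul0r.
apply/seteqP; split=> x //= [_]; rewrite big1 => [|i _]; last by rewrite mul0r.
by move/eqP; rewrite eq_sym oner_eq0.
Qed.

Lemma is_face_support c : is_face R d cube (word_face (support_word c)).
Proof.
exists c, (\sum_i `|c i|); rewrite word_face_support; split=> // x cx.
exact/dot_le_norm1/cube_norm_le1.
Qed.

(* The linear functional whose maximal face on the cube is cut out by [w]. *)
Definition word_coeff (w : seq (gen d)) (i : 'I_d) : R :=
  ((i, true) \in w)%:R - ((i, false) \in w)%:R.

Lemma support_word_coeff w :
  ~~ contradictory w -> support_word (word_coeff w) =i w.
Proof.
move=> /existsPn nc [i b]; rewrite mem_support_word /word_coeff /=.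
move: (nc i); case: b; case: ((i, true) \in w); case: ((i, false) \in w) => //= _;
  by rewrite ?subr0 ?sub0r ?oppr_eq0 ?oppr_gt0 ?ltr01 ?ltr10 ?oner_eq0 ?subrr ?eqxx ?ltxx.
Qed.

Lemma word_face_is_face w : is_face R d cube (word_face w).
Proof.
have [cw|ncw] := boolP (contradictory w).
  by rewrite word_face_contradictory //; exact: is_face_set0.
rewrite -(word_face_cong (cube_cong_eq_mem (support_word_coeff ncw))).
exact: is_face_support.
Qed.

Lemma face_is_word_face F : (0 < d)%N -> is_face R d cube F ->
  exists w : seq (gen d), word_face w = F.
Proof.
move=> d_gt0 [c [b [c_le_b ->]]].
have max_le_b : \sum_i `|c i| <= b.
  by rewrite -(dot_vertex_sign c); apply/c_le_b/vertex_cube.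
have [->|b_neq] := eqVneq b (\sum_i `|c i|).
  by exists (support_word c); rewrite word_face_support.
exists (zero_word (Ordinal d_gt0)).
rewrite word_face_contradictory ?zero_word_contradictory //.
apply/seteqP; split=> x //= [cx cxb]; move/negP: b_neq; apply.
by rewrite eq_le max_le_b -cxb dot_le_norm1 //; exact: cube_norm_le1.
Qed.

Lemma word_face_subset_mem w1 w2 : ~~ contradictory w1 ->
  word_face w1 `<=` word_face w2 -> {subset w2 <= w1}.
Proof.
move=> nc1 sub12 g gw2; apply/negPn/negP => gw1.
have [x /sub12] := word_face_avoid nc1 gw1.
rewrite word_faceE => -[_ /(_ g gw2) ->].
by rewrite /bsign; case: g.2 => /=; lra.
Qed.

Lemma word_face_eq_cong w1 w2 : word_face w1 = word_face w2 -> cong w1 w2.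
Proof.
move=> E.
have empty_contradictory w : word_face w = set0 -> contradictory w.
  by move=> Ew; apply: contraT => /word_face_nonempty; rewrite Ew => -[? []].
have [c1|nc1] := boolP (contradictory w1); have [c2|nc2] := boolP (contradictory w2).
- exact: cong_contradictory.
- by move: nc2; rewrite empty_contradictory // -E word_face_contradictory.
- by move: nc1; rewrite empty_contradictory // E word_face_contradictory.
- apply: cube_cong_eq_mem => g; apply/idP/idP => g_in.
    by apply: (word_face_subset_mem nc2) g_in; rewrite E.
  by apply: (word_face_subset_mem nc1) g_in; rewrite E.
Qed.

End CubeFaces.

Theorem mainTheorem8 (R : realType) (d : nat) (hd : (0 < d)%N) :
  (forall w : seq (gen d), is_face R d (cube R d) (word_face R d w)) /\
  (forall F, is_face R d (cube R d) F -> exists w : seq (gen d), word_face R d w = F) /\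
  (forall w1 w2 : seq (gen d),
      word_face R d w1 = word_face R d w2 <-> word_cong (gen d) (cube_rel d) w1 w2).
Proof.
split; first exact: word_face_is_face.
split=> [F|w1 w2]; first exact: face_is_word_face.
split; [exact: word_face_eq_cong | exact: word_face_cong].
Qed.
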